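(* For $c\in(0,\tfrac12]$ and a path $\xi=x_1x_2\cdots\in\Omega$ put \[ K^{(c)}_n(\xi):=\prod_{j=2}^{n}\bigl(1-c\,\overline{x}_{j-1}x_j\bigr)\qquad(K^{(c)}_0=K^{(c)}_1=1). \] This is the capital of the multiplicative contrarian strategy $\mathcal{P}_c$: $M_n=-c\,\overline{x}_{n-1}\mathcal{K}_{n-1}$ with initial capital $1$. Let Skeptic follow the mixture $\mathcal{Q}=\sum_{i\ge1}2^{-i}\mathcal{P}_{2^{-i}}$ with initial capital $1$. His capital is then \[ \mathcal{K}_n=\sum_{i\ge1}2^{-i}K^{(2^{-i})}_n . \] Then $\mathcal{K}_n(\xi)\ge 0$ for all $\xi\in\Omega$ and all $n$. Moreover $\mathcal{K}_n(\xi)\to\infty$ as $n\to\infty$ for every path $\xi\notin E_1$, where \[ E_1:=\{\xi:\ \limsup_{n\to\infty}\sqrt n\,|\overline{x}_n|\ge 1\}. \] Equivalently, Skeptic can force $E_1$ by $\mathcal{Q}$.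
   Context: Fair-coin game: the initial capital is $\mathcal{K}_0$. In rounds $n=1,2,\dots$ Skeptic announces $M_n\in\mathbb{R}$, then Reality announces $x_n\in\{-1,1\}$, and $\mathcal{K}_n:=\mathcal{K}_{n-1}+M_nx_n$. Skeptic's move may depend only on $x_1,\dots,x_{n-1}$. A path is an infinite sequence $\xi=x_1x_2\cdots\in\{-1,1\}^{\mathbb{N}}$, and $\Omega$ is the set of paths. We write $s_n:=x_1+\cdots+x_n$ and $\overline{x}_n:=s_n/n$, with $s_0=\overline{x}_0=0$. A strategy $\mathcal{P}$ assigns a real number to each finite sequence (situation). Its capital process with zero initial capital is $\mathcal{K}^{\mathcal{P}}_n(\xi)=\sum_{k=1}^n\mathcal{P}(x_1\cdots x_{k-1})x_k$. Skeptic forces an event $E\subseteq\Omega$ if there is a strategy $\mathcal{P}$ such that $\mathcal{K}^{\mathcal{P}}_n(\xi)\ge-1$ for all $\xi\in\Omega$ and all $n\ge0$, and $\lim_n\mathcal{K}^{\mathcal{P}}_n(\xi)=\infty$ for all $\xi\notin E$. Equivalently, the capital started from $1$ stays nonnegative and tends to infinity off $E$. *)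

From Stdlib Require Import Reals.
From Coquelicot Require Import Coquelicot.
Open Scope R_scope.

(* A path is xi : nat -> bool; the move x_k (k >= 1) is +1 if xi k, -1 otherwise.
   The value xi 0 is never used. *)
Definition xv (xi : nat -> bool) (k : nat) : R := if xi k then 1 else -1.

Fixpoint s (xi : nat -> bool) (n : nat) : R :=
  match n with
  | O => 0
  | S m => s xi m + xv xi (S m)
  end.

Definition xbar (xi : nat -> bool) (n : nat) : R :=
  match n with
  | O => 0
  | _ => s xi n / INR n
  end.

(* K^(c)_n = prod_{j=2}^n (1 - c xbar_{j-1} x_j), K_0 = K_1 = 1.
   (The factor for j = 1 is 1 since xbar_0 = 0.) *)
Fixpoint Kc (c : R) (xi : nat -> bool) (n : nat) : R :=
  match n with
  | O => 1
  | S m => Kc c xi m * (1 - c * xbar xi m * xv xi (S m))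
  end.

Definition Pmove (c : R) (xi : nat -> bool) (n : nat) : R :=
  - c * xbar xi (n - 1) * Kc c xi (n - 1).

(* weights / parameters 2^{-i}, i >= 1 (series index i' = i - 1) *)
Definition w (i : nat) : R := (/ 2) ^ (S i).

Definition Qmove (xi : nat -> bool) (n : nat) : R :=
  Series (fun i => w i * Pmove (w i) xi n).

Fixpoint capitalQ (xi : nat -> bool) (n : nat) : R :=
  match n with
  | O => 1
  | S m => capitalQ xi m + Qmove xi (S m) * xv xi (S m)
  end.

Definition mixK (xi : nat -> bool) (n : nat) : R :=
  Series (fun i => w i * Kc (w i) xi n).

Definition notin_E1 (xi : nat -> bool) : Prop :=
  Rbar_lt (LimSup_seq (fun n => sqrt (INR n) * Rabs (xbar xi n))) (Finite 1).

(* The contrarian factor [1 - c xbar_{n-1} x_n] stays in [1 - c, 1 + c], so each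
   K^(c) is positive and the mixture converges, its capital being the mixture of
   the capitals. Off E_1 there are a < 1 and N with s_n^2 <= a n for n >= N.
   Then, for 0 < c <= (1 - a) / 8, the potential
     ln K^(c)_n + c s_n^2 / (2n) - (c (1 - a) / 4) ln n
   is nondecreasing from N on: the second-order expansion of ln(1 + u) shows
   that each step gains at least c (1 - a) / (4n) >= (c (1 - a) / 4) ln((n+1)/n).
   Since c s_n^2 / (2n) <= c / 2, K^(c)_n grows at least like n^(c (1 - a) / 4),
   and so does the mixture, which dominates each of its terms. *)

From Stdlib Require Import Reals Lra Lia Psatz.
From Coquelicot Require Import Coquelicot.
Open Scope R_scope.

Lemma xv_cases xi k : xv xi k = 1 \/ xv xi k = -1.
Proof. unfold xv; destruct (xi k); auto. Qed.

Lemma Rabs_s_le xi n : Rabs (s xi n) <= INR n.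
Proof.
  induction n as [|m IH]; simpl s.
  - rewrite Rabs_R0; simpl; lra.
  - rewrite S_INR. apply Rabs_le_between in IH. apply Rabs_le_between.
    destruct (xv_cases xi (S m)) as [E|E]; rewrite E; lra.
Qed.

Lemma xbar_S xi m : xbar xi (S m) = s xi (S m) / INR (S m).
Proof. reflexivity. Qed.

Lemma Rabs_xbar_le xi n : Rabs (xbar xi n) <= 1.
Proof.
  destruct n as [|m].
  - simpl. rewrite Rabs_R0; lra.
  - rewrite xbar_S. assert (Hn : 0 < INR (S m)) by (apply lt_0_INR; lia).
    rewrite Rabs_div by (apply Rgt_not_eq; lra). rewrite (Rabs_pos_eq (INR (S m))) by lra.
    apply Rcomplements.Rle_div_l; [lra|]. rewrite Rmult_1_l. apply Rabs_s_le.
Qed.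

Lemma Kc_factor_bounds c xi m : 0 <= c ->
  1 - c <= 1 - c * xbar xi m * xv xi (S m) <= 1 + c.
Proof.
  intros Hc. pose proof (Rabs_xbar_le xi m) as Hb. apply Rabs_le_between in Hb.
  destruct (xv_cases xi (S m)) as [E|E]; rewrite E; split; nra.
Qed.

Lemma Kc_pos c xi n : 0 <= c < 1 -> 0 < Kc c xi n.
Proof.
  intros Hc. induction n as [|m IH]; simpl; [lra|].
  pose proof (Kc_factor_bounds c xi m (proj1 Hc)). apply Rmult_lt_0_compat; lra.
Qed.

Lemma Kc_le_pow c xi n : 0 <= c < 1 -> Kc c xi n <= (1 + c) ^ n.
Proof.
  intros Hc. induction n as [|m IH]; simpl; [lra|].
  pose proof (Kc_factor_bounds c xi m (proj1 Hc)). pose proof (Kc_pos c xi m Hc).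
  rewrite (Rmult_comm (1 + c)). apply Rmult_le_compat; lra.
Qed.

Lemma w_bounds i : 0 < w i <= 1/2.
Proof.
  unfold w; simpl.
  assert (0 < (/2) ^ i <= 1) by (induction i; simpl; lra). lra.
Qed.

Lemma is_series_w : is_series w 1.
Proof.
  assert (Hq : Rabs (/2) < 1) by (rewrite Rabs_pos_eq; lra).
  pose proof (is_series_scal_r (/2) _ _ (is_series_geom (/2) Hq)) as H.
  replace 1 with (/ (1 - /2) * /2) by field.
  eapply is_series_ext; [|exact H]. intros n. unfold w. simpl. ring.
Qed.

Lemma Pmove_S c xi m : Pmove c xi (S m) = - c * xbar xi m * Kc c xi m.
Proof. unfold Pmove. simpl. rewrite Nat.sub_0_r. reflexivity. Qed.

(* Domination by [2^m w i] makes the mixture of the moves summable. *)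
Lemma is_series_Qmove xi m :
  is_series (fun i => w i * Pmove (w i) xi (S m)) (Qmove xi (S m)).
Proof.
  apply Series_correct.
  apply (@ex_series_le R_AbsRing R_CompleteNormedModule _ (fun i => w i * 2 ^ m)).
  - intros i. change (norm ?x) with (Rabs x). rewrite Pmove_S.
    pose proof (w_bounds i) as Hw. assert (Hw' : 0 <= w i < 1) by lra.
    pose proof (Kc_pos _ xi m Hw'). pose proof (Kc_le_pow _ xi m Hw').
    assert ((1 + w i) ^ m <= 2 ^ m) by (apply pow_incr; lra).
    pose proof (Rabs_xbar_le xi m).
    replace (w i * (- w i * xbar xi m * Kc (w i) xi m))
      with (- (w i * (w i * xbar xi m) * Kc (w i) xi m)) by ring.
    rewrite Rabs_Ropp, !Rabs_mult, (Rabs_pos_eq (w i)), (Rabs_pos_eq (Kc _ _ _)) by lra.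
    assert (w i * Rabs (xbar xi m) <= 1) by nra.
    assert (w i * Rabs (xbar xi m) * Kc (w i) xi m <= 2 ^ m) by nra.
    rewrite Rmult_assoc. apply Rmult_le_compat_l; lra.
  - exists (1 * 2 ^ m). apply is_series_scal_r, is_series_w.
Qed.

Lemma is_series_capitalQ xi n :
  is_series (fun i => w i * Kc (w i) xi n) (capitalQ xi n).
Proof.
  induction n as [|m IH]; simpl capitalQ.
  - eapply is_series_ext; [|exact is_series_w]. intros; simpl; ring.
  - pose proof (is_series_scal_r (xv xi (S m)) _ _ (is_series_Qmove xi m)) as HQ.
    eapply is_series_ext; [|exact (is_series_plus _ _ _ _ IH HQ)].
    intros i. simpl. rewrite Pmove_S. change plus with Rplus. ring.
Qed.

Lemma is_series_ge_term a l i :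
  (forall k, 0 <= a k) -> is_series a l -> a i <= l.
Proof.
  intros Ha Hl.
  assert (Hsum : forall n, (i <= n)%nat -> a i <= sum_n a n).
  { intros n Hn. rewrite sum_n_Reals. induction Hn as [|n Hn IH]; simpl.
    - destruct i as [|j]; simpl; [lra|].
      pose proof (cond_pos_sum a j Ha). lra.
    - pose proof (Ha (S n)). lra. }
  apply (is_lim_seq_le_loc (fun _ => a i) (sum_n a) (a i) l).
  - exists i. exact Hsum.
  - apply is_lim_seq_const.
  - exact Hl.
Qed.

Lemma ln_le_sub_1 y : 0 < y -> ln y <= y - 1.
Proof. intros Hy. pose proof (exp_ineq1_le (ln y)). rewrite exp_ln in H; lra. Qed.

Lemma ln_1p_ge u : -1/2 <= u -> u - 2 * u ^ 2 <= ln (1 + u).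
Proof.
  intros Hu.
  assert (P : 0 < 1 + u) by lra.
  pose proof (ln_le_sub_1 (/ (1 + u)) (Rinv_0_lt_compat _ P)) as H.
  rewrite ln_Rinv in H by lra.
  assert (u - 2 * u ^ 2 <= 1 - / (1 + u)).
  { replace (1 - / (1 + u)) with (u / (1 + u)) by (field; lra).
    apply Rcomplements.Rle_div_r; [lra|]. nra. }
  lra.
Qed.

Lemma ln_succ_sub_le m : 0 < m -> ln (m + 1) - ln m <= / m.
Proof.
  intros Hm. rewrite <- ln_div by lra.
  replace (/ m) with ((m + 1) / m - 1) by (field; lra).
  apply ln_le_sub_1, Rdiv_lt_0_compat; lra.
Qed.

(* One step of the potential argument, with [S = s_m] and [X = x_(m+1)]. *)
Lemma potential_increment (a c m S X : R) :
  0 <= a < 1 -> 0 < c <= (1 - a) / 8 -> 1 <= m -> X = 1 \/ X = -1 ->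
  S ^ 2 <= a * m -> (S + X) ^ 2 <= a * (m + 1) ->
  c * (1 - a) / 4 * (ln (m + 1) - ln m)
    <= ln (1 - c * (S / m) * X) + c * (S + X) ^ 2 / (2 * (m + 1)) - c * S ^ 2 / (2 * m).
Proof.
  intros Ha Hc Hm HX HS HS1.
  set (u := - c * (S / m) * X).
  assert (Hsm : Rabs (S / m) <= 1).
  { rewrite Rabs_div by (apply Rgt_not_eq; lra). rewrite (Rabs_pos_eq m) by lra.
    apply Rcomplements.Rle_div_l; [lra|]. rewrite Rmult_1_l.
    apply Rabs_le. split; nra. }
  assert (Hu : -1/2 <= u).
  { unfold u. apply Rabs_le_between in Hsm. destruct HX as [-> | ->]; nra. }
  replace (1 - c * (S / m) * X) with (1 + u) by (unfold u; ring).
  set (q0 := S ^ 2 / m). set (q1 := (S + X) ^ 2 / (m + 1)).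
  assert (Hq0 : 0 <= q0 <= a).
  { unfold q0. split; [apply Rdiv_le_0_compat; nra|].
    apply Rcomplements.Rle_div_l; lra. }
  assert (Hq1 : q1 <= a) by (unfold q1; apply Rcomplements.Rle_div_l; lra).
  (* Since X^2 = 1, the quadratic terms combine exactly. *)
  assert (Id : u - 2 * u ^ 2 + c * (S + X) ^ 2 / (2 * (m + 1)) - c * S ^ 2 / (2 * m)
               = / m * (c / 2 - c * q1 / 2 - 2 * c ^ 2 * q0)).
  { unfold u, q0, q1. destruct HX as [-> | ->]; field; lra. }
  assert (Hgain : c * (1 - a) / 4 <= c / 2 - c * q1 / 2 - 2 * c ^ 2 * q0) by nra.
  pose proof (ln_1p_ge u Hu).
  pose proof (ln_succ_sub_le m ltac:(lra)).
  assert (c * (1 - a) / 4 * (ln (m + 1) - ln m) <= c * (1 - a) / 4 * / m)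
    by (apply Rmult_le_compat_l; nra).
  assert (c * (1 - a) / 4 * / m <= / m * (c / 2 - c * q1 / 2 - 2 * c ^ 2 * q0)).
  { rewrite Rmult_comm. apply Rmult_le_compat_l; [|lra].
    apply Rlt_le, Rinv_0_lt_compat; lra. }
  lra.
Qed.

Lemma is_lim_seq_ln_INR_affine (A d : R) :
  0 < d -> is_lim_seq (fun n => A + d * ln (INR n)) p_infty.
Proof.
  intros Hd.
  assert (Hln : is_lim_seq (fun n => ln (INR n)) p_infty).
  { apply (is_lim_comp_seq ln INR p_infty p_infty is_lim_ln_p).
    - exists 0%nat. discriminate.
    - exact is_lim_seq_INR. }
  apply (is_lim_seq_plus _ _ A p_infty); [apply is_lim_seq_const| |easy].
  eapply is_lim_seq_ext; [intros n; apply Rmult_comm|].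
  apply (is_lim_seq_mult _ _ p_infty d); [exact Hln|apply is_lim_seq_const|].
  apply is_Rbar_mult_p_infty_pos. exact Hd.
Qed.

Section Growth.

Variables (xi : nat -> bool) (a c : R) (N : nat).
Hypotheses (Ha : 0 <= a < 1) (Hc : 0 < c <= (1 - a) / 8) (HN : (1 <= N)%nat)
  (Hs : forall n, (N <= n)%nat -> s xi n ^ 2 <= a * INR n).

Let delta := c * (1 - a) / 4.

Definition potential n :=
  ln (Kc c xi n) + c * s xi n ^ 2 / (2 * INR n) - delta * ln (INR n).

Let Hc1 : 0 <= c < 1.
Proof. lra. Qed.

Lemma potential_step m : (N <= m)%nat -> potential m <= potential (S m).
Proof.
  intros Hm. unfold potential.
  pose proof (Kc_factor_bounds c xi m (proj1 Hc1)).
  assert (Hm1 : 1 <= INR m) by (apply (le_INR 1); lia).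
  pose proof (potential_increment a c (INR m) (s xi m) (xv xi (S m)) Ha Hc Hm1
    (xv_cases xi (S m)) (Hs m Hm) ltac:(rewrite <- S_INR; exact (Hs (S m) ltac:(lia)))).
  simpl Kc. simpl s. rewrite S_INR, ln_mult by (try apply Kc_pos; lra).
  replace (xbar xi m) with (s xi m / INR m) by (destruct m; [lia|reflexivity]).
  unfold delta in *. lra.
Qed.

Lemma potential_ge n : (N <= n)%nat -> potential N <= potential n.
Proof.
  induction 1 as [|n Hn IH]; [lra|]. pose proof (potential_step n Hn). lra.
Qed.

Lemma is_lim_seq_Kc_p_infty : is_lim_seq (Kc c xi) p_infty.
Proof.
  apply (is_lim_seq_le_p_loc (fun n => exp (potential N - c / 2 + delta * ln (INR n)))).
  - exists N. intros n Hn.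
    assert (Hn0 : 0 < INR n) by (apply lt_0_INR; lia).
    assert (Hsq : c * s xi n ^ 2 / (2 * INR n) <= c / 2).
    { apply Rcomplements.Rle_div_l; [lra|].
      assert (s xi n ^ 2 <= INR n) by (pose proof (Hs n Hn); nra).
      nra. }
    pose proof (potential_ge n Hn) as Hp. unfold potential at 2 in Hp.
    rewrite <- (exp_ln (Kc c xi n)) by (apply Kc_pos, Hc1).
    assert (Hle : potential N - c / 2 + delta * ln (INR n) <= ln (Kc c xi n)) by lra.
    destruct (Rle_lt_or_eq_dec _ _ Hle) as [Hlt | ->]; [|lra].
    apply Rlt_le, exp_increasing, Hlt.
  - apply (is_lim_comp_seq exp _ p_infty p_infty is_lim_exp_p).
    + exists 0%nat. discriminate.
    + apply is_lim_seq_ln_INR_affine. unfold delta. nra.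
Qed.

End Growth.

Lemma LimSup_seq_lt_eventually (u : nat -> R) (l : R) :
  Rbar_lt (LimSup_seq u) l -> exists b, b < l /\ eventually (fun n => u n <= b).
Proof.
  intros H. destruct (ex_LimSup_seq u) as [L HL].
  rewrite (is_LimSup_seq_unique _ _ HL) in H.
  destruct L as [r| |]; simpl in H, HL; [|contradiction|].
  - assert (He : 0 < (l - r) / 2) by lra.
    destruct (proj2 (HL (mkposreal _ He))) as [N HN]; simpl in HN.
    exists ((l + r) / 2). split; [lra|].
    exists N. intros n Hn. specialize (HN n Hn). lra.
  - destruct (HL (l - 1)) as [N HN].
    exists (l - 1). split; [lra|]. exists N. intros n Hn. specialize (HN n Hn). lra.
Qed.

Lemma notin_E1_sq_s_le xi : notin_E1 xi ->
  exists a N, 0 <= a < 1 /\ (1 <= N)%nat /\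
    forall n, (N <= n)%nat -> s xi n ^ 2 <= a * INR n.
Proof.
  intros H. destruct (LimSup_seq_lt_eventually _ 1 H) as [b [Hb [N HN]]].
  exists (Rmax b 0 ^ 2), (max N 1). split; [|split; [lia|]].
  { split; [apply pow2_ge_0|]. assert (Rmax b 0 < 1) by (apply Rmax_lub_lt; lra).
    pose proof (Rmax_r b 0). nra. }
  intros n Hn. specialize (HN n ltac:(lia)).
  assert (Hn0 : 0 < INR n) by (apply lt_0_INR; lia).
  assert (Hu : 0 <= sqrt (INR n) * Rabs (xbar xi n))
    by (apply Rmult_le_pos; [apply sqrt_pos|apply Rabs_pos]).
  assert (Hsq : (sqrt (INR n) * Rabs (xbar xi n)) ^ 2 <= Rmax b 0 ^ 2).
  { pose proof (Rmax_l b 0). apply pow_incr. lra. }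
  replace ((sqrt (INR n) * Rabs (xbar xi n)) ^ 2) with (s xi n ^ 2 / INR n) in Hsq.
  - exact (proj1 (Rcomplements.Rle_div_l _ _ _ Hn0) Hsq).
  - rewrite Rpow_mult_distr, pow2_abs, pow2_sqrt by lra.
    destruct n as [|k]; [simpl in Hn0; lra|]. rewrite xbar_S. field. lra.
Qed.

Theorem theorem1 (xi : nat -> bool) :
  (forall n : nat, capitalQ xi n = mixK xi n) /\
  (forall n : nat, 0 <= mixK xi n) /\
  (notin_E1 xi -> is_lim_seq (mixK xi) p_infty).
Proof.
  assert (Heq : forall n, capitalQ xi n = mixK xi n).
  { intros n. symmetry. apply is_series_unique, is_series_capitalQ. }
  assert (Hmix : forall n, is_series (fun i => w i * Kc (w i) xi n) (mixK xi n)).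
  { intros n. rewrite <- Heq. apply is_series_capitalQ. }
  assert (Hterm : forall n i, 0 <= w i * Kc (w i) xi n).
  { intros n i. pose proof (w_bounds i).
    apply Rmult_le_pos; [lra|]. apply Rlt_le, Kc_pos. lra. }
  assert (Hge : forall n i, w i * Kc (w i) xi n <= mixK xi n).
  { intros n i. apply (is_series_ge_term (fun i => w i * Kc (w i) xi n));
      [apply Hterm|apply Hmix]. }
  split; [exact Heq|split].
  - intros n. exact (Rle_trans _ _ _ (Hterm n 0%nat) (Hge n 0%nat)).
  - intros HE. destruct (notin_E1_sq_s_le xi HE) as [a [N [Ha [HN Hs]]]].
    assert (Hi : exists i, w i <= (1 - a) / 8).
    { destruct (pow_lt_1_zero (/2) ltac:(rewrite Rabs_pos_eq; lra) ((1 - a) / 8)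
        ltac:(lra)) as [i Hi].
      exists i. specialize (Hi (S i) ltac:(lia)).
      rewrite Rabs_pos_eq in Hi by (apply pow_le; lra). unfold w. lra. }
    destruct Hi as [i Hi]. pose proof (w_bounds i).
    pose proof (is_lim_seq_Kc_p_infty xi a (w i) N Ha ltac:(lra) HN Hs) as HK.
    apply (is_lim_seq_le_p_loc (fun n => w i * Kc (w i) xi n)).
    + exists 0%nat. intros n _. apply Hge.
    + apply (is_lim_seq_mult _ _ (w i) p_infty); [apply is_lim_seq_const|exact HK|].
      apply is_Rbar_mult_sym, is_Rbar_mult_p_infty_pos. simpl. lra.
Qed.
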